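(* For Pólya trees $t$ let $S_t$, $T$ be as in the context. Then \[ \sum_{\substack{t \in \mathcal{P}_{\le n}\\ |t| \ge \log n}} \left(1 - \frac{[z^n]S_t(z)}{[z^n]T(z)}\right) = \mathcal{O}\!\left(\frac{n}{\log n}\right) \quad \text{as } n\to\infty, \] where $\log$ denotes the logarithm to base $1/\sigma$.
   Context: A recursive tree of size $n$ is a rooted non-plane tree with $n$ nodes labeled $1,\dots,n$ with labels increasing along every path from the root; their exponential generating function is $T(z)=\ln\frac{1}{1-z}$, so $[z^n]T(z)=1/n$. A Pólya tree is an unlabeled rooted non-plane tree; $\mathcal{P}_{\le n}$ is the set of Pólya trees with at most $n$ nodes; $\sigma\approx 0.338$ is the radius of convergence of the ordinary generating function of Pólya trees. A fringe subtree is a node together with all its descendants; its shape is the Pólya tree obtained by forgetting labels. For a Pólya tree $t$ with $k$ nodes, $\ell(t)$ is the number of increasing labelings of $t$ by $1,\dots,k$, $w(t)=\ell(t)/k!$ and $P_t(z)=w(t)z^k$. $S_t(z)$ is the exponential generating function of recursive trees having no fringe subtree of shape $t$; it is the solution of $S_t'(z)=\exp(S_t(z))-P_t'(z)$, $S_t(0)=0$, explicitly $S_t(z)=\ln\frac{1}{1-\int_0^z e^{-P_t(v)}\,dv}-P_t(z)$. *)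

From Stdlib Require Import Reals List Permutation ClassicalEpsilon.
From mathcomp Require Import all_boot.

Set Implicit Arguments.
Unset Strict Implicit.
Unset Printing Implicit Defensive.

(* A rooted tree with an (irrelevant) ordering of children. *)
Inductive ptree : Type := PNode of seq ptree.

Fixpoint nnodes (t : ptree) : nat :=
  let: PNode s := t in (sumn (map nnodes s)).+1.

Inductive iso : ptree -> ptree -> Prop :=
  IsoNode (s1 s2 s2' : seq ptree) :
    Permutation s2 s2' -> Forall2 iso s1 s2' -> iso (PNode s1) (PNode s2).

(* L is a complete system of pairwise non-isomorphic representatives of the
   Polya trees (isomorphism classes) satisfying the iso-invariant property P. *)
Definition rep_system (P : ptree -> Prop) (L : seq ptree) : Prop :=
  (forall t, In t L -> P t) /\
  (forall t, P t -> exists t', In t' L /\ iso t t') /\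
  (forall i j, (i < size L)%nat -> (j < size L)%nat ->
     iso (nth (PNode [::]) L i) (nth (PNode [::]) L j) -> i = j).

(* A recursive tree of size n: nodes 'I_n (label i stands for i+1), root 0,
   every other node i has a parent par i < i (labels increase away from the root). *)
Definition is_rec (n : nat) (par : {ffun 'I_n -> 'I_n}) : bool :=
  (0 < n) && [forall i : 'I_n, (par i < i) || ((val i == 0) && (par i == i))].

(* The shape of the fringe subtree rooted at v (fuel n suffices). *)
Fixpoint build (n : nat) (par : 'I_n -> 'I_n) (fuel : nat) (v : 'I_n) : ptree :=
  if fuel is f.+1 then
    PNode (map (build par f) (filter (fun u => (par u == v) && (u != v)) (enum 'I_n)))
  else PNode [::].

Definition fringe_shape (n : nat) (par : {ffun 'I_n -> 'I_n}) (v : 'I_n) : ptree :=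
  build par n v.

Definition pbool (P : Prop) : bool :=
  if excluded_middle_informative P then true else false.

Definition avoids (n : nat) (t : ptree) (par : {ffun 'I_n -> 'I_n}) : bool :=
  [forall v : 'I_n, ~~ pbool (iso (fringe_shape par v) t)].

Local Open Scope R_scope.

(* [z^n] S_t(z) and [z^n] T(z) as exponential generating function coefficients *)
Definition coefS (t : ptree) (n : nat) : R :=
  INR #|[pred par : {ffun 'I_n -> 'I_n} | is_rec par && avoids t par]| / INR n`!.

Definition coefT (n : nat) : R :=
  INR #|[pred par : {ffun 'I_n -> 'I_n} | is_rec par]| / INR n`!.

Definition polya_count (k m : nat) : Prop :=
  exists L, rep_system (fun t => nnodes t = k) L /\ size L = m.

Definition polya_num (k : nat) : nat := ClassicalEpsilon.epsilon (inhabits 0%nat) (polya_count k).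

Definition polya_ogf_converges (r : R) : Prop :=
  exists l, infinite_sum (fun k => INR (polya_num k) * r ^ k) l.

(* radius of convergence = sup { r >= 0 | sum_k p_k r^k converges } *)
Definition polya_sigma : R :=
  @ClassicalEpsilon.epsilon R (inhabits R0) (is_lub (fun r => 0 <= r /\ polya_ogf_converges r)).

Definition logs (x : R) : R := ln x / ln (1 / polya_sigma).

(* The quantity [1 - [z^n]S_t / [z^n]T] is the proportion of recursive trees of
   size n having a fringe subtree of shape t.  Pairwise non-isomorphic shapes
   occurring in one recursive tree occur at distinct nodes, so the sum over
   shapes with at least K nodes is bounded by the expected number of nodes
   whose fringe subtree has at least K nodes.  Growing a recursive tree by
   attaching the node n+1 to any of the n previous nodes yields a recurrence
   for this expectation, whose solution is exactly n/K for 1 <= K <= n.  With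
   K the ceiling of log n this gives n / log n.  Finally log n > 0 for n >= 2
   since 1/8 <= sigma <= 9/10: Pólya trees with k nodes inject into bit strings
   of length 2k, and spines decorated by two different 3-node gadgets give
   2^m pairwise non-isomorphic trees with 4m+1 nodes. *)

From Stdlib Require Import Reals List.
Set Warnings "-notation-overridden".
From Stdlib Require Import Permutation Lia Lra ClassicalEpsilon.
From mathcomp Require Import all_boot zify.
Set Implicit Arguments.
Unset Strict Implicit.

(** * Isomorphism of rooted trees *)

Local Open Scope nat_scope.

Fixpoint ptree_nested_ind (P : ptree -> Prop)
    (IH : forall s, Forall P s -> P (PNode s)) (t : ptree) : P t :=
  let: PNode s := t in IH s ((fix all_kids (l : seq ptree) : Forall P l :=
    if l is x :: r then Forall_cons x (ptree_nested_ind IH x) (all_kids r)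
    else Forall_nil _) s).

Lemma Forall2_Forall_impl A B (R Q : A -> B -> Prop) l1 l2 :
  Forall (fun x => forall y, R x y -> Q x y) l1 -> Forall2 R l1 l2 -> Forall2 Q l1 l2.
Proof.
move=> H F; elim: F H => [|x y l l' Rxy _ IH] H; constructor.
- exact: (Forall_inv H).
- exact: IH (Forall_inv_tail H).
Qed.

Lemma Forall2_compose A B C (R : A -> B -> Prop) (S : B -> C -> Prop)
    (Q : A -> C -> Prop) l1 l2 l3 :
  Forall (fun x => forall y z, R x y -> S y z -> Q x z) l1 ->
  Forall2 R l1 l2 -> Forall2 S l2 l3 -> Forall2 Q l1 l3.
Proof.
move=> H F; elim: F l3 H => [|x y l l' Rxy _ IH] l3 H F'; inversion F'; subst.
  by constructor.
constructor; first exact: (Forall_inv H) Rxy _.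
exact: IH (Forall_inv_tail H) _.
Qed.

Lemma Forall2_map_eq A B (f : A -> B) l1 l2 :
  Forall2 (fun x y => f x = f y) l1 l2 -> map f l1 = map f l2.
Proof. by elim=> //= x y l l' -> _ ->. Qed.

Lemma perm_sumn (a b : seq nat) : Permutation a b -> sumn a = sumn b.
Proof. elim => //= [x l l' _ -> //| x y l | l l' l'' _ -> _ -> //]; by rewrite addnCA. Qed.

Lemma iso_inv s1 s2 : iso (PNode s1) (PNode s2) ->
  exists2 s2', Permutation s2 s2' & Forall2 iso s1 s2'.
Proof. by move=> H; inversion H; exists s2'. Qed.

Lemma iso_refl t : iso t t.
Proof.
elim/ptree_nested_ind: t => s IH; apply: (IsoNode (Permutation_refl s)).
by elim: IH => [|x l ? _ ?]; constructor.
Qed.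

Lemma iso_sym t1 t2 : iso t1 t2 -> iso t2 t1.
Proof.
elim/ptree_nested_ind: t1 t2 => s1 IH [s2] /iso_inv [s2' P F].
have /Forall2_flip F' := Forall2_Forall_impl IH F.
have [s1' [P1 F1]] := Permutation_Forall2 (Permutation_sym P) F'.
exact: IsoNode P1 F1.
Qed.

Lemma iso_trans t1 t2 t3 : iso t1 t2 -> iso t2 t3 -> iso t1 t3.
Proof.
elim/ptree_nested_ind: t1 t2 t3 => s1 IH [s2] [s3] /iso_inv [s2' P F] /iso_inv [s3' P' F'].
have [s3'' [P'' F'']] := Permutation_Forall2 P F'.
apply: IsoNode (Permutation_trans P' P'') _.
exact: Forall2_compose IH F F''.
Qed.

Lemma iso_nnodes t1 t2 : iso t1 t2 -> nnodes t1 = nnodes t2.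
Proof.
elim/ptree_nested_ind: t1 t2 => s1 IH [s2] /iso_inv [s2' P F] /=.
rewrite (perm_sumn (Permutation_map nnodes P)).
by rewrite (Forall2_map_eq (Forall2_Forall_impl IH F)).
Qed.

(** * Counting Pólya trees and the radius sigma *)

Fixpoint code (t : ptree) : seq bool :=
  let: PNode s := t in true :: flatten (map code s) ++ [:: false].

Definition code_forest (s : seq ptree) : seq bool := flatten (map code s) ++ [:: false].

Lemma code_forest_cons s ts : code_forest (PNode s :: ts) = true :: code_forest s ++ code_forest ts.
Proof. by rewrite /code_forest /= -!catA. Qed.

Lemma size_code t : size (code t) = (nnodes t).*2.
Proof.
elim/ptree_nested_ind: t => s IH /=.
rewrite size_cat size_flatten /shape -map_comp addn1 doubleS; congr _.+2.
by elim: IH => //= x l -> _ ->; rewrite doubleD.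
Qed.

Lemma size_code_forest s : size (code_forest s) = (nnodes (PNode s)).*2.-1.
Proof. by have := size_code (PNode s); rewrite /= doubleS => -[->]. Qed.

Fixpoint parse_forest (fuel : nat) (b : seq bool) : option (seq ptree * seq bool) :=
  if fuel is f.+1 then
    match b with
    | false :: r => Some ([::], r)
    | true :: r =>
      if parse_forest f r is Some (kids, r') then
        if parse_forest f r' is Some (sibs, r'') then Some (PNode kids :: sibs, r'')
        else None
      else None
    | [::] => None
    end
  else None.

Lemma parse_code_forest f s r :
  size (code_forest s) <= f -> parse_forest f (code_forest s ++ r) = Some (s, r).
Proof.
elim: f s r => [|f IH] s r; first by rewrite size_code_forest.
case: s => [|[k] ts] //; rewrite code_forest_cons /= size_cat => Hs.
rewrite -catA IH ?IH //; move: Hs; rewrite !size_code_forest /=; lia.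
Qed.

Definition decode (b : seq bool) : option ptree :=
  if b is true :: r then
    if parse_forest (size b) r is Some (kids, [::]) then Some (PNode kids) else None
  else None.

Lemma codeK : pcancel code decode.
Proof.
case=> s; have := @parse_code_forest (size (code_forest s)).+1 s [::].
by rewrite cats0 /= => ->.
Qed.

Lemma code_inj : injective code.
Proof. exact: pcan_inj codeK. Qed.

Definition bitstrings (m : nat) : seq (seq bool) := map val (enum {: m.-tuple bool}).

Lemma size_bitstrings m : size (bitstrings m) = 2 ^ m.
Proof. by rewrite size_map -cardE card_tuple card_bool. Qed.

Lemma mem_bitstrings b : b \in bitstrings (size b).
Proof. by apply/mapP; exists (in_tuple b); rewrite ?mem_enum. Qed.

Lemma In_pmapP (A : eqType) B (f : A -> option B) (l : seq A) y :
  In y (pmap f l) <-> exists2 x, x \in l & f x = Some y.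
Proof.
elim: l => [|x l IH] /=; first by split=> // [[]].
case E: (f x) => [z|] /=; rewrite IH; split.
- by case=> [<-|[w Hw Ew]]; [exists x; rewrite ?mem_head | exists w; rewrite ?inE ?Hw ?orbT].
- by case=> w; rewrite inE => /orP [/eqP ->|Hw] Ew; [left; congruence | right; exists w].
- by case=> w Hw Ew; exists w; rewrite ?inE ?Hw ?orbT.
- by case=> w; rewrite inE => /orP [/eqP ->|Hw] Ew; [congruence | exists w].
Qed.

Lemma In_filterP (p : pred ptree) l t : In t (filter p l) <-> In t l /\ p t.
Proof.
elim: l => [|x l IH] /=; first by split=> // [[]].
case E: (p x) => /=; rewrite IH; split.
- by case=> [<-|[Ht Hp]]; split=> //; [left|right].
- by case=> [[->|Ht] Hp]; [left|right].
- by case=> Ht Hp; split; first right.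
- by case=> [[<-|Ht] Hp]; rewrite ?E in Hp.
Qed.

Definition candidates (k : nat) : seq ptree :=
  filter (fun t => nnodes t == k) (pmap decode (bitstrings k.*2)).

Lemma In_candidates k t : In t (candidates k) <-> nnodes t = k.
Proof.
rewrite In_filterP; split=> [[_ /eqP //]|Ht]; split; last exact/eqP.
apply/In_pmapP; exists (code t); last exact: codeK.
by rewrite -Ht -size_code mem_bitstrings.
Qed.

Fixpoint iso_dedup (l : seq ptree) : seq ptree :=
  if l is x :: r then
    let r' := iso_dedup r in if pbool (exists y, In y r' /\ iso x y) then r' else x :: r'
  else [::].

Lemma In_iso_dedup l y : In y (iso_dedup l) -> In y l.
Proof.
elim: l => [|x l IH] //=; case: (pbool _) => /=; first by move/IH; right.
by case=> [->|/IH]; [left|right].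
Qed.

Lemma iso_dedup_cover l x : In x l -> exists y, In y (iso_dedup l) /\ iso x y.
Proof.
elim: l => [|z l IH] //= [<-|Hx].
  rewrite /pbool; case: excluded_middle_informative => [//|_] /=.
  by exists z; split; [left|exact: iso_refl].
have [y [Hy Hxy]] := IH Hx; exists y; split => //.
by case: (pbool _) => //=; right.
Qed.

Lemma In_nth_seq (l : seq ptree) i : i < size l -> In (nth (PNode [::]) l i) l.
Proof. by elim: l i => [|x l IH] [|i] //= Hi; [left|right; exact: IH]. Qed.

Lemma In_nth_exists (l : seq ptree) t : In t l -> exists2 i, i < size l & nth (PNode [::]) l i = t.
Proof.
elim: l => [|x l IH] //= [<-|/IH [i Hi <-]]; first by exists 0.
by exists i.+1.
Qed.

Lemma iso_dedup_uniq l i j : i < size (iso_dedup l) -> j < size (iso_dedup l) ->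
  iso (nth (PNode [::]) (iso_dedup l) i) (nth (PNode [::]) (iso_dedup l) j) -> i = j.
Proof.
elim: l i j => [|x l IH] i j //=.
rewrite /pbool; case: excluded_middle_informative => /= Hx; first exact: IH.
case: i j => [|i] [|j] //= Hi Hj Hiso; last by congr S; exact: IH.
- by case: Hx; exists (nth (PNode [::]) (iso_dedup l) j); split => //; exact: In_nth_seq.
- by case: Hx; exists (nth (PNode [::]) (iso_dedup l) i); split; [exact: In_nth_seq|exact: iso_sym].
Qed.

Lemma rep_system_iso_dedup (P : ptree -> Prop) l :
  (forall t, In t l <-> P t) -> rep_system P (iso_dedup l).
Proof.
move=> Hl; split; [|split].
- by move=> t /In_iso_dedup /Hl.
- by move=> t /Hl /iso_dedup_cover.
- exact: iso_dedup_uniq.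
Qed.

Lemma rep_system_size_le k L : rep_system (fun t => nnodes t = k) L -> size L <= 2 ^ k.*2.
Proof.
case=> [HP [_ Huniq]].
rewrite -(size_map code) -size_bitstrings; apply: uniq_leq_size.
  apply/(uniqP [::]) => i j; rewrite !inE size_map => Hi Hj.
  rewrite !(nth_map (PNode [::])) // => /code_inj E.
  by apply: Huniq => //; rewrite E; exact: iso_refl.
move=> b /(nthP [::]) [i]; rewrite size_map => Hi <-.
rewrite (nth_map (PNode [::])) // -(HP _ (In_nth_seq Hi)) -size_code.
exact: mem_bitstrings.
Qed.

Definition gadget (b : bool) : ptree :=
  if b then PNode [:: PNode [:: PNode [::]]] else PNode [:: PNode [::]; PNode [::]].

Fixpoint spine (bs : seq bool) : ptree :=
  if bs is b :: r then PNode [:: gadget b; spine r] else PNode [::].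

Lemma nnodes_spine bs : nnodes (spine bs) = (size bs).*2.*2.+1.
Proof. by elim: bs => //= b bs ->; case: b => /=; rewrite addn0 -!addnn; lia. Qed.

Lemma iso_size_kids s1 s2 : iso (PNode s1) (PNode s2) -> size s1 = size s2.
Proof.
move=> /iso_inv [s2' P F]; change (length s1 = length s2).
by rewrite (Forall2_length F) (Permutation_length P).
Qed.

Lemma spine_iso_inj bs bs' : size bs = size bs' -> iso (spine bs) (spine bs') -> bs = bs'.
Proof.
elim: bs bs' => [|b bs IH] [|b' bs'] //= [Hs] /iso_inv [s2' P F].
case: (Permutation_length_2_inv P) => E; subst s2'.
- move: F => /Forall2_cons_iff [Hb /Forall2_cons_iff [Hbs _]].
  have -> : b = b' by move: Hb {P}; case: b; case: b' => // /iso_size_kids.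
  by rewrite (IH _ Hs Hbs).
- move: F => /Forall2_cons_iff [/iso_nnodes]; rewrite nnodes_spine.
  by case: b => /=; lia.
Qed.

Lemma rep_system_size_ge m L :
  rep_system (fun t => nnodes t = (m.*2.*2).+1) L -> 2 ^ m <= size L.
Proof.
case=> [_ [Hcover _]].
pose hits (bs : m.-tuple bool) i := i < size L /\ iso (spine bs) (nth (PNode [::]) L i).
pose idx bs := epsilon (inhabits 0) (hits bs).
have idxP bs : hits bs (idx bs).
  apply: (epsilon_spec (inhabits 0) (hits bs)).
  have [t' [Ht' Hiso]] := Hcover (spine bs) ltac:(by rewrite nnodes_spine size_tuple).
  by have [i Hi Ei] := In_nth_exists Ht'; exists i; rewrite /hits Ei.
have idx_inj : injective idx.
  move=> bs bs' E; have [_ Hb] := idxP bs; have [_ Hb'] := idxP bs'.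
  rewrite E in Hb; apply: val_inj; apply: spine_iso_inj; first by rewrite !size_tuple.
  exact: iso_trans Hb (iso_sym Hb').
have -> : 2 ^ m = size (map idx (enum {: m.-tuple bool})).
  by rewrite size_map -cardE card_tuple card_bool.
rewrite -(size_iota 0 (size L)).
apply: uniq_leq_size; first by rewrite map_inj_uniq // enum_uniq.
by move=> i /mapP [bs _ ->]; rewrite mem_iota add0n; case: (idxP bs).
Qed.

Lemma polya_num_spec k : polya_count k (polya_num k).
Proof.
apply: epsilon_spec; exists (size (iso_dedup (candidates k))), (iso_dedup (candidates k)).
by split=> //; apply: rep_system_iso_dedup => t; exact: In_candidates.
Qed.

Lemma polya_num_le k : polya_num k <= 4 ^ k.
Proof.
have [L [HL <-]] := polya_num_spec k.
by rewrite -[4]/(2 ^ 2) -expnM mul2n; exact: rep_system_size_le HL.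
Qed.

Lemma polya_num_ge m : 2 ^ m <= polya_num (4 * m).+1.
Proof.
have [L [HL <-]] := polya_num_spec (4 * m).+1.
by apply: rep_system_size_ge; rewrite -mul2n -mul2n mulnA.
Qed.

Local Open Scope R_scope.

Lemma INR_expn a b : INR (a ^ b)%nat = INR a ^ b.
Proof. by elim: b => //= b IH; rewrite expnS mult_INR IH. Qed.

Lemma pow_muln (x : R) m n : x ^ (m * n)%nat = (x ^ m) ^ n.
Proof. by rewrite -pow_mult. Qed.

Lemma polya_ogf_converges_eighth : polya_ogf_converges (1/8).
Proof.
have Hgeom := GP_infinite (1/2) ltac:(rewrite Rabs_pos_eq; lra).
have Hdom k : 0 <= INR (polya_num k) * (1/8) ^ k <= 1 * (1/2) ^ k.
  split; first by apply: Rmult_le_pos; [exact: pos_INR|apply: pow_le; lra].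
  apply: (Rle_trans _ (INR 4 ^ k * (1/8) ^ k)).
    apply: Rmult_le_compat_r; first by apply: pow_le; lra.
    by rewrite -INR_expn; apply/le_INR/leP/polya_num_le.
  by rewrite -Rpow_mult_distr Rmult_1_l; apply: pow_incr; simpl INR; lra.
have [l Hl] := Rseries_CV_comp _ _ Hdom (exist _ _ Hgeom).
by exists l.
Qed.

Lemma polya_ogf_diverges r : 9/10 < r -> ~ polya_ogf_converges r.
Proof.
(* The terms of index 4N+1 are at least r (2 r^4)^N >= r, so they do not tend to 0. *)
move=> Hr [l Hl].
have [N HN] := Hl (1/4) ltac:(lra).
pose k := (4 * N)%nat.
have /Rabs_def2 [H1 H1'] := HN k ltac:(apply/leP; rewrite /k; lia).
have /Rabs_def2 [H2 H2'] := HN k.+1 ltac:(apply/leP; rewrite /k; lia).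
have Hterm : r <= INR (polya_num k.+1) * r ^ k.+1.
  apply: (Rle_trans _ (INR (2 ^ N) * r ^ k.+1)); last first.
    by apply: Rmult_le_compat_r; [apply: pow_le; lra | apply/le_INR/leP/polya_num_ge].
  rewrite INR_expn /= /k pow_muln -Rmult_assoc (Rmult_comm _ r) Rmult_assoc.
  rewrite -Rpow_mult_distr -{1}(Rmult_1_r r); apply: Rmult_le_compat_l; first lra.
  apply: pow_R1_Rle; have : (9/10) ^ 4 <= r ^ 4 by apply: pow_incr; lra.
  by simpl; lra.
have Hstep : sum_f_R0 (fun j => INR (polya_num j) * r ^ j) k.+1 =
  sum_f_R0 (fun j => INR (polya_num j) * r ^ j) k + INR (polya_num k.+1) * r ^ k.+1 by [].
rewrite Hstep in H2 H2'; lra.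
Qed.

Lemma polya_sigma_bounds : 1/8 <= polya_sigma <= 9/10.
Proof.
pose E r := 0 <= r /\ polya_ogf_converges r.
have Hub : is_upper_bound E (9/10).
  move=> r [_ Hc]; case: (Rle_lt_dec r (9/10)) => // /polya_ogf_diverges.
  by case.
have HE : E (1/8) by split; [lra | exact: polya_ogf_converges_eighth].
have [s Hs] := completeness E (ex_intro _ _ Hub) (ex_intro _ _ HE).
have [Hsig1 Hsig2] : is_lub E polya_sigma by apply: (epsilon_spec (inhabits R0) (is_lub E)); exists s.
by split; [exact: Hsig1 | exact: Hsig2].
Qed.

Lemma logs_gt0 n : (2 <= n)%nat -> 0 < logs (INR n).
Proof.
move=> Hn; have [Hs1 Hs2] := polya_sigma_bounds.
have Hn2 : 2 <= INR n by apply: (le_INR 2); apply/leP.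
rewrite /logs; apply: Rdiv_lt_0_compat; rewrite -ln_1; apply: ln_increasing; try lra.
by rewrite /Rdiv Rmult_1_l -Rinv_1; apply: Rinv_lt_contravar; lra.
Qed.

(** * Recursive trees and their fringe subtrees *)

Local Open Scope nat_scope.

Lemma card_sum_mem (T : finType) (A : {pred T}) : #|A| = \sum_x (x \in A).
Proof. by rewrite -sum1_card big_mkcond; apply: eq_bigr => x _; case: (x \in A). Qed.

Lemma card_bigcup_disjoint (I T : finType) (P : pred I) (F : I -> {set T}) :
  (forall i j, P i -> P j -> i != j -> [disjoint F i & F j]) ->
  #|\bigcup_(i | P i) F i| = \sum_(i | P i) #|F i|.
Proof.
move=> disjF.
rewrite [\bigcup_(i | P i) _]big_mkcond [\sum_(i | P i) _]big_mkcond /= -sum1_card.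
rewrite partition_disjoint_bigcup => [|i j ij].
  by apply: eq_bigr => i _; rewrite sum1_card; case: (P i); rewrite ?cards0.
case Pi: (P i); case Pj: (P j); rewrite -setI_eq0 ?setI0 ?set0I //.
by rewrite setI_eq0 disjF.
Qed.

Section RecursiveTree.

Variables (n : nat) (par : {ffun 'I_n -> 'I_n}).
Hypothesis par_rec : is_rec par.

Lemma rec_parent i : (par i < i) || ((val i == 0) && (par i == i)).
Proof. by case/andP: par_rec => _ /forallP. Qed.

Lemma rec_parent_lt i : nat_of_ord i != 0 -> par i < i.
Proof. by case/orP: (rec_parent i) => // /andP [/eqP ->]. Qed.

Lemma rec_parent_root i : nat_of_ord i = 0 -> par i = i.
Proof. by move=> i0; case/orP: (rec_parent i) => [|/andP [_ /eqP //]]; rewrite i0. Qed.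

Lemma rec_parent_le i : par i <= i.
Proof. by case/orP: (rec_parent i) => [/ltnW //|/andP [_ /eqP ->]]. Qed.

Lemma iter_parent_le k (i : 'I_n) : iter k par i <= i - k.
Proof.
elim: k => [|k IH] /=; first by rewrite subn0.
have [E|E] := eqVneq (nat_of_ord (iter k par i)) 0; first by rewrite rec_parent_root E.
by move: (rec_parent_lt E) IH; move: (iter k par i) => j; lia.
Qed.

Lemma iter_parent_root k (i : 'I_n) : i <= k -> nat_of_ord (iter k par i) = 0.
Proof. by move=> ik; have := iter_parent_le k i; lia. Qed.

Definition is_child (c v : 'I_n) : bool := (par c == v) && (c != v).

Lemma is_child_lt c v : is_child c v -> v < c.
Proof.
case/andP=> /eqP <- cv; apply: rec_parent_lt.
by apply: contraNneq cv => /rec_parent_root ->.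
Qed.

Definition desc_within (b : nat) (v : 'I_n) : {set 'I_n} :=
  [set u | [exists k : 'I_b, iter k par u == v]].

Lemma desc_withinP b u v :
  n <= b -> reflect (exists k, iter k par u = v) (u \in desc_within b v).
Proof.
move=> nb; rewrite inE; apply: (iffP existsP) => [[k /eqP]|[k Ek]]; first by exists k.
have ub : u < b by exact: leq_trans (ltn_ord u) nb.
have [kb|bk] := ltnP k b; first by exists (Ordinal kb); rewrite Ek.
exists (Ordinal ub); apply/eqP/val_inj; rewrite -Ek /= !iter_parent_root //.
exact: leq_trans (ltnW ub) bk.
Qed.

Lemma desc_within_le b v u : u \in desc_within b v -> v <= u.
Proof.
by rewrite inE => /existsP [j /eqP <-]; have := iter_parent_le j u; lia.
Qed.

Lemma desc_within_succ f v :
  desc_within f.+2 v = v |: \bigcup_(c | is_child c v) desc_within f.+1 c.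
Proof.
apply/setP=> u; rewrite !inE; apply/existsP/orP => [[k Hk]|].
  pose P j := (j < f.+2) && (iter j par u == v).
  have exP : exists j, P j by exists k; rewrite /P ltn_ord.
  case: (ex_minnP exP) => -[|j] /andP [Hj /eqP Hju] Hmin; first by left; apply/eqP.
  right; apply/bigcupP; exists (iter j par u).
    rewrite /is_child -iterS Hju eqxx /=; apply/negP => /eqP Ej.
    by have := Hmin j; rewrite /P Ej eqxx andbT (ltnW Hj) ltnn => /(_ isT).
  by rewrite inE; apply/existsP; exists (@Ordinal f.+1 j Hj).
case=> [/eqP ->|/bigcupP [c /andP [/eqP Hc _]]]; first by exists ord0.
by rewrite inE => /existsP [k /eqP Hk]; exists (@Ordinal f.+2 k.+1 (ltn_ord k)); rewrite /= Hk Hc.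
Qed.

Lemma desc_within_disjoint f c1 c2 v : is_child c1 v -> is_child c2 v -> c1 != c2 ->
  [disjoint desc_within f c1 & desc_within f c2].
Proof.
move=> ch1 ch2 c12; rewrite -setI_eq0; apply/eqP/setP => u; rewrite !inE.
apply/negbTE/negP => /andP [/existsP [k1 /eqP E1] /existsP [k2 /eqP E2]].
wlog k12 : k1 k2 c1 c2 ch1 ch2 c12 E1 E2 / k1 <= k2.
  move=> W; have [k12|/ltnW k21] := leqP k1 k2; first exact: (W k1 k2 c1 c2).
  by apply: (W k2 k1 c2 c1); rewrite // eq_sym.
have : iter (k2 - k1) par c1 = c2 by rewrite -E2 -E1 -iterD subnK.
case: (k2 - k1) => [/eqP|d]; first by rewrite (negbTE c12).
rewrite iterSr; case/andP: ch1 => /eqP -> _ Ed.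
have := is_child_lt ch2; have := iter_parent_le d v; rewrite Ed; lia.
Qed.

Lemma card_desc_within_succ f v :
  #|desc_within f.+2 v| = (\sum_(c | is_child c v) #|desc_within f.+1 c|).+1.
Proof.
have v_notin : v \notin \bigcup_(c | is_child c v) desc_within f.+1 c.
  by apply/bigcupP => -[c /is_child_lt vc /desc_within_le]; lia.
rewrite desc_within_succ cardsU1 v_notin card_bigcup_disjoint //.
by move=> c1 c2; exact: desc_within_disjoint.
Qed.

Lemma nnodes_build f v : nnodes (build par f v) = #|desc_within f.+1 v|.
Proof.
elim: f v => [|f IH] v.
  apply/esym/eqP/cards1P; exists v; apply/setP=> u; rewrite !inE.
  by apply/existsP/eqP => [[k]|->]; [rewrite (ord1 k) => /eqP | exists ord0].
rewrite card_desc_within_succ /= sumnE big_map big_map big_filter big_enum_cond /=.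
by congr _.+1; apply: eq_bigr => c _; rewrite IH.
Qed.

End RecursiveTree.

Definition fringe_size n (par : {ffun 'I_n -> 'I_n}) (v : 'I_n) : nat :=
  #|desc_within par n v|.

Lemma nnodes_fringe_shape n (par : {ffun 'I_n -> 'I_n}) v :
  is_rec par -> nnodes (fringe_shape par v) = fringe_size par v.
Proof.
move=> par_rec; rewrite /fringe_shape (nnodes_build par_rec); apply: eq_card => u.
by apply/(desc_withinP par_rec _ _ (leqnSn n))/(desc_withinP par_rec _ _ (leqnn n)).
Qed.

Definition graft n (par : {ffun 'I_n -> 'I_n}) (p : 'I_n) : {ffun 'I_n.+1 -> 'I_n.+1} :=
  [ffun i => if unlift ord_max i is Some j then lift ord_max (par j) else lift ord_max p].

Definition prune n (par : {ffun 'I_n.+2 -> 'I_n.+2}) : {ffun 'I_n.+1 -> 'I_n.+1} :=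
  [ffun j => odflt j (unlift ord_max (par (lift ord_max j)))].

Definition last_parent n (par : {ffun 'I_n.+2 -> 'I_n.+2}) : 'I_n.+1 :=
  odflt ord0 (unlift ord_max (par ord_max)).

Section Graft.

Variables (n : nat) (par : {ffun 'I_n -> 'I_n}) (p : 'I_n).

Lemma graft_lift j : graft par p (lift ord_max j) = lift ord_max (par j).
Proof. by rewrite ffunE liftK. Qed.

Lemma graft_max : graft par p ord_max = lift ord_max p.
Proof. by rewrite ffunE unlift_none. Qed.

Lemma iter_graft_lift k j : iter k (graft par p) (lift ord_max j) = lift ord_max (iter k par j).
Proof. by elim: k => //= k ->; exact: graft_lift. Qed.

Lemma iter_graft_max k : iter k.+1 (graft par p) ord_max = lift ord_max (iter k par p).
Proof. by rewrite iterSr graft_max iter_graft_lift. Qed.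

Lemma is_rec_graft : 0 < n -> is_rec (graft par p) = is_rec par.
Proof.
move=> n_gt0; rewrite /is_rec n_gt0 /=; apply/forallP/forallP => H j.
  by have := H (lift ord_max j); rewrite graft_lift !lift_max (inj_eq (@lift_inj _ ord_max)).
case: (unliftP ord_max j) => [i ->|->]; last by rewrite graft_max lift_max /= ltn_ord.
by rewrite graft_lift !lift_max (inj_eq (@lift_inj _ ord_max)); exact: H.
Qed.

End Graft.

Lemma pruneK n (par : {ffun 'I_n.+1 -> 'I_n.+1}) p : prune (graft par p) = par.
Proof. by apply/ffunP => j; rewrite ffunE graft_lift liftK. Qed.

Lemma last_parent_graft n (par : {ffun 'I_n.+1 -> 'I_n.+1}) p : last_parent (graft par p) = p.
Proof. by rewrite /last_parent graft_max liftK. Qed.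

Lemma graft_prune n (par : {ffun 'I_n.+2 -> 'I_n.+2}) :
  is_rec par -> graft (prune par) (last_parent par) = par.
Proof.
move=> par_rec; apply/ffunP => i; case: (unliftP ord_max i) => [j ->|->].
  rewrite graft_lift ffunE; case: (unliftP ord_max (par (lift ord_max j))) => [y ->|E] //=.
  have := rec_parent_le par_rec (lift ord_max j); rewrite E lift_max /= => lt_nj.
  by have := ltn_ord j; rewrite /=; lia.
rewrite graft_max /last_parent; case: (unliftP ord_max (par ord_max)) => [y ->|E] //=.
by have := rec_parent_lt par_rec (i := ord_max) isT; rewrite E ltnn.
Qed.

Lemma sum_is_rec_succ n (F : {ffun 'I_n.+2 -> 'I_n.+2} -> nat) :
  \sum_(par | is_rec par) F par =
  \sum_(par : {ffun 'I_n.+1 -> 'I_n.+1} | is_rec par) \sum_(p : 'I_n.+1) F (graft par p).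
Proof.
rewrite pair_big /= (reindex_onto (fun q => graft q.1 q.2) (fun par => (prune par, last_parent par))) /=;
  last exact: graft_prune.
by apply: eq_bigl => -[q p] /=; rewrite is_rec_graft // pruneK last_parent_graft eqxx andbT.
Qed.

Section GraftFringe.

Variables (n : nat) (par : {ffun 'I_n -> 'I_n}) (p : 'I_n).
Hypothesis par_rec : is_rec par.

Let graft_rec : is_rec (graft par p).
Proof. by rewrite is_rec_graft //; case/andP: par_rec. Qed.

Lemma mem_desc_graft_lift u v :
  (lift ord_max u \in desc_within (graft par p) n.+1 (lift ord_max v)) =
  (u \in desc_within par n v).
Proof.
apply/(desc_withinP graft_rec _ _ (leqnn _))/(desc_withinP par_rec _ _ (leqnn _)).
  by case=> k; rewrite iter_graft_lift => /lift_inj; exists k.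
by case=> k Ek; exists k; rewrite iter_graft_lift Ek.
Qed.

Lemma mem_desc_graft_max v :
  (ord_max \in desc_within (graft par p) n.+1 (lift ord_max v)) = (p \in desc_within par n v).
Proof.
apply/(desc_withinP graft_rec _ _ (leqnn _))/(desc_withinP par_rec _ _ (leqnn _)).
  case=> -[|k]; first by move=> /eqP; rewrite (negbTE (neq_lift _ _)).
  by rewrite iter_graft_max => /lift_inj; exists k.
by case=> k Ek; exists k.+1; rewrite iter_graft_max Ek.
Qed.

Lemma widen_lift_max (i : 'I_n) : widen_ord (leqnSn n) i = lift ord_max i.
Proof. by apply: val_inj; rewrite /= /bump leqNgt ltn_ord. Qed.

Lemma fringe_size_graft_lift v :
  fringe_size (graft par p) (lift ord_max v) = fringe_size par v + (p \in desc_within par n v).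
Proof.
rewrite /fringe_size !card_sum_mem big_ord_recr mem_desc_graft_max; congr addn.
by apply: eq_bigr => u _; rewrite widen_lift_max mem_desc_graft_lift.
Qed.

Lemma fringe_size_graft_max : fringe_size (graft par p) ord_max = 1.
Proof.
apply/eqP/cards1P; exists ord_max; apply/setP => u; rewrite inE.
apply/(desc_withinP graft_rec _ _ (leqnn _))/eqP => [[k]|->]; last by exists 0.
case: (unliftP ord_max u) => [j ->|//]; rewrite iter_graft_lift => /eqP.
by rewrite eq_sym (negbTE (neq_lift _ _)).
Qed.

End GraftFringe.

(** * Fringe-size statistics of recursive trees *)

Lemma fringe_size_le n (par : {ffun 'I_n -> 'I_n}) v : fringe_size par v <= n.
Proof. by rewrite -[n in _ <= n]card_ord max_card. Qed.

Lemma fringe_size_gt0 n (par : {ffun 'I_n -> 'I_n}) v : 0 < fringe_size par v.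
Proof.
have n_gt0 : 0 < n by exact: leq_ltn_trans (ltn_ord v).
by apply/card_gt0P; exists v; rewrite inE; apply/existsP; exists (Ordinal n_gt0).
Qed.

(* Attaching the new node below p enlarges by one exactly the fringe subtrees
   containing p. *)
Lemma sum_graft_fringe n (par : {ffun 'I_n -> 'I_n}) (g : nat -> nat) : is_rec par ->
  \sum_(p : 'I_n) \sum_(v : 'I_n.+1) g (fringe_size (graft par p) v) =
  \sum_(v : 'I_n) ((n - fringe_size par v) * g (fringe_size par v)
                   + fringe_size par v * g (fringe_size par v).+1) + n * g 1.
Proof.
move=> par_rec.
under eq_bigr => p _ do rewrite big_ord_recr /= fringe_size_graft_max //.
rewrite big_split /= sum_nat_const card_ord; congr addn.
rewrite exchange_big; apply: eq_bigr => v _.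
under eq_bigr => p _ do rewrite widen_lift_max fringe_size_graft_lift //.
rewrite (bigID (mem (desc_within par n v))) /= addnC.
rewrite (eq_bigr (fun _ => g (fringe_size par v))) => [|u /negbTE ->]; last by rewrite addn0.
rewrite [X in _ + X](eq_bigr (fun _ => g (fringe_size par v).+1)) => [|u ->]; last by rewrite addn1.
rewrite !sum_nat_const; congr (_ * _ + _ * _).
by rewrite -[n in n - _]card_ord -(cardC (desc_within par n v)) addKn.
Qed.

Definition nrec (n : nat) : nat := #|[pred par : {ffun 'I_n -> 'I_n} | is_rec par]|.

Definition subtree_stat (n : nat) (g : nat -> nat) : nat :=
  \sum_(par : {ffun 'I_n -> 'I_n} | is_rec par) \sum_(v : 'I_n) g (fringe_size par v).

Lemma nrecE n : nrec n = \sum_(par : {ffun 'I_n -> 'I_n} | is_rec par) 1.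
Proof. by rewrite /nrec -sum1_card; apply: eq_bigl => par; rewrite inE. Qed.

Lemma nrec1 : nrec 1 = 1.
Proof.
pose par0 : {ffun 'I_1 -> 'I_1} := [ffun => ord0].
rewrite /nrec (@eq_card _ _ (pred1 par0)) ?card1 // => par; rewrite !inE.
have -> : par = par0 by apply/ffunP => i; rewrite ffunE !ord1.
by rewrite eqxx /is_rec /=; apply/forallP => i; rewrite !ord1 eqxx.
Qed.

Lemma nrec_succ n : nrec n.+2 = n.+1 * nrec n.+1.
Proof.
rewrite !nrecE sum_is_rec_succ big_distrr /=.
by apply: eq_bigr => par _; rewrite sum_nat_const card_ord muln1.
Qed.

Lemma nrec_gt0 n : 0 < n -> 0 < nrec n.
Proof. by case: n => // n _; elim: n => [|n IH]; rewrite ?nrec1 // nrec_succ muln_gt0. Qed.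

Lemma subtree_stat_succ n g : subtree_stat n.+2 g =
  subtree_stat n.+1 (fun s => (n.+1 - s) * g s + s * g s.+1) + n.+1 * nrec n.+1 * g 1.
Proof.
rewrite /subtree_stat sum_is_rec_succ nrecE mulnAC big_distrr -big_split /=.
by apply: eq_bigr => par par_rec; rewrite sum_graft_fringe // muln1.
Qed.

Lemma eq_subtree_stat n f h :
  (forall s, s <= n -> f s = h s) -> subtree_stat n f = subtree_stat n h.
Proof. by move=> fh; apply: eq_bigr => par _; apply: eq_bigr => v _; apply/fh/fringe_size_le. Qed.

Lemma subtree_statD n f h :
  subtree_stat n (fun s => f s + h s) = subtree_stat n f + subtree_stat n h.
Proof. by rewrite /subtree_stat -big_split; apply: eq_bigr => par _; rewrite big_split. Qed.

Lemma subtree_statMn n a f : subtree_stat n (fun s => a * f s) = a * subtree_stat n f.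
Proof. by rewrite /subtree_stat big_distrr; apply: eq_bigr => par _; rewrite big_distrr. Qed.

Definition count_large (n K : nat) : nat := subtree_stat n (fun s => K <= s).

Lemma count_large1 n : count_large n 1 = n * nrec n.
Proof.
rewrite /count_large /subtree_stat nrecE big_distrr; apply: eq_bigr => par _.
rewrite (eq_bigr (fun _ => 1)) => [|v _]; last by rewrite fringe_size_gt0.
by rewrite sum_nat_const card_ord.
Qed.

Lemma count_large_gt n K : n < K -> count_large n K = 0.
Proof.
move=> nK; rewrite /count_large (@eq_subtree_stat _ _ (fun _ => 0 * 0)) => [|s sn].
  by rewrite subtree_statMn.
by apply/eqP; rewrite eqb0 -ltnNge; exact: leq_ltn_trans sn nK.
Qed.

(* Stated additively to avoid truncated subtraction. *)
Lemma count_large_succ n K : 1 < K ->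
  count_large n.+2 K + K.-1 * count_large n.+1 K =
  n.+1 * count_large n.+1 K + K.-1 * count_large n.+1 K.-1.
Proof.
move=> K_gt1; rewrite /count_large subtree_stat_succ leqNgt K_gt1 muln0 addn0.
rewrite -!subtree_statMn -!subtree_statD; apply: eq_subtree_stat => s sn.
by case: (leqP K s) => Ks; case: (leqP K s.+1) => KSs; case: (leqP K.-1 s) => KPs /=; lia.
Qed.

Lemma count_large_exact n K : 0 < K <= n -> K * count_large n K = n * nrec n.
Proof.
elim: n K => [|n IH] K /andP [K_gt0 Kn]; first by case: K K_gt0 Kn.
have [->|K_neq1] := eqVneq K 1; first by rewrite mul1n count_large1.
case: n IH Kn => [|n] IH Kn; first by lia.
have K_gt1 : 1 < K by lia.
have rec := count_large_succ n K_gt1.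
have IH1 : K.-1 * count_large n.+1 K.-1 = n.+1 * nrec n.+1 by apply: IH; lia.
rewrite nrec_succ; have [Kn1|Kn1] := leqP K n.+1; last first.
  rewrite (@count_large_gt n.+1 K) // !muln0 addn0 IH1 in rec.
  by rewrite rec; have -> : K = n.+2 by lia.
have IH2 : K * count_large n.+1 K = n.+1 * nrec n.+1 by apply: IH; lia.
have := congr1 (muln K) rec.
have h1 : K * (K.-1 * count_large n.+1 K) = K.-1 * (n.+1 * nrec n.+1) by rewrite mulnCA IH2.
have h2 : K * (n.+1 * count_large n.+1 K) = n.+1 * (n.+1 * nrec n.+1) by rewrite mulnCA IH2.
have h3 : K * (K.-1 * count_large n.+1 K.-1) = K * (n.+1 * nrec n.+1) by rewrite IH1.
nia.
Qed.

Lemma count_large_le n K : 0 < K -> K * count_large n K <= n * nrec n.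
Proof.
move=> K_gt0; have [Kn|nK] := leqP K n; first by rewrite count_large_exact ?K_gt0.
by rewrite count_large_gt // muln0.
Qed.

(** * Shapes with many nodes *)

Definition iso_uniq (L : seq ptree) : Prop :=
  forall i j, i < size L -> j < size L ->
    iso (nth (PNode [::]) L i) (nth (PNode [::]) L j) -> i = j.

Definition ncontain (t : ptree) (n : nat) : nat :=
  #|[pred par : {ffun 'I_n -> 'I_n} | is_rec par && ~~ avoids t par]|.

Lemma ncontainE t n :
  ncontain t n = \sum_(par : {ffun 'I_n -> 'I_n} | is_rec par) ~~ avoids t par.
Proof.
rewrite /ncontain card_sum_mem [RHS]big_mkcond; apply: eq_bigr => par _.
by rewrite inE; case: (is_rec par).
Qed.

Lemma sum_contained_shapes_le n (par : {ffun 'I_n -> 'I_n}) (L : seq ptree) K :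
  is_rec par -> iso_uniq L ->
  \sum_(t <- L | K <= nnodes t) ~~ avoids t par <= \sum_(v : 'I_n) (K <= fringe_size par v).
Proof.
case: n par => [|n] par par_rec L_uniq; first by case/andP: par_rec.
rewrite big_mkcond (big_nth (PNode [::])) big_mkord.
rewrite -(card_sum_mem [pred v | K <= fringe_size par v]).
pose shape i := nth (PNode [::]) L i.
pose hit (i : 'I_(size L)) := (K <= nnodes (shape i)) && ~~ avoids (shape i) par.
rewrite (eq_bigr (fun i => nat_of_bool (hit i))) => [|i _]; last by rewrite /hit; case: ifP.
rewrite -(card_sum_mem [pred i | hit i]).
pose node (i : 'I_(size L)) := odflt ord0 [pick v | pbool (iso (fringe_shape par v) (shape i))].
have nodeP i : hit i -> iso (fringe_shape par (node i)) (shape i).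
  case/andP=> _; rewrite /avoids negb_forall => /existsP [v]; rewrite negbK => Hv.
  rewrite /node; case: pickP => [w|/(_ v)]; last by rewrite Hv.
  by rewrite /pbool; case: excluded_middle_informative.
rewrite -(@card_in_imset _ _ node) => [|i j Hi Hj Eij]; last first.
  apply/val_inj/L_uniq; rewrite ?ltn_ord //; have := nodeP i Hi; rewrite Eij => /iso_sym Hi'.
  exact: iso_trans Hi' (nodeP j Hj).
apply/subset_leq_card/subsetP => _ /imsetP [i Hi ->]; move: Hi; rewrite !inE => Hi.
rewrite -(nnodes_fringe_shape _ par_rec) (iso_nnodes (nodeP i Hi)).
by case/andP: Hi.
Qed.

Lemma sum_ncontain_le n (L : seq ptree) K : iso_uniq L -> 0 < K ->
  K * \sum_(t <- L | K <= nnodes t) ncontain t n <= n * nrec n.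
Proof.
move=> L_uniq K_gt0; apply: leq_trans (count_large_le n K_gt0); rewrite leq_mul2l.
under eq_bigr do rewrite ncontainE.
rewrite exchange_big /=; apply/orP; right; apply: leq_sum => par par_rec.
exact: sum_contained_shapes_le.
Qed.

Local Open Scope R_scope.

Lemma nat_ceil (D : R) : exists K : nat, forall k : nat, D <= INR k <-> (K <= k)%nat.
Proof.
pose P k := if Rle_dec D (INR k) then true else false.
have PE k : P k <-> D <= INR k by rewrite /P; case: Rle_dec.
have exP : exists k, P k.
  have [k Dk] := INR_archimed 1 D Rlt_0_1.
  by exists k; apply/PE; lra.
case: (ex_minnP exP) => K /PE DK K_min; exists K => k; split => [/PE|Kk]; first exact: K_min.
by apply: Rle_trans DK (le_INR _ _ (elimT leP Kk)).
Qed.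

Lemma one_sub_coefS_coefT t n : (0 < n)%nat ->
  1 - coefS t n / coefT n = INR (ncontain t n) / INR (nrec n).
Proof.
move=> n_gt0; have nrec_pos : 0 < INR (nrec n) by apply/lt_0_INR/ltP/nrec_gt0.
have fact_pos : 0 < INR n`! by apply/lt_0_INR/ltP/fact_gt0.
have nrec_split : nrec n = (#|[pred par : {ffun 'I_n -> 'I_n} | is_rec par && avoids t par]|
                            + ncontain t n)%nat.
  rewrite /nrec /ncontain -(cardID [pred par | avoids t par]); congr addn; apply: eq_card => par;
    by rewrite !inE andbC.
rewrite /coefS /coefT -/(nrec n) nrec_split plus_INR in nrec_pos *.
field; lra.
Qed.

Lemma fold_Rplus_INR (L : seq ptree) (c : ptree -> nat) (a : R) :
  fold_right Rplus 0 (map (fun t => INR (c t) / a) L) = INR (\sum_(t <- L) c t) / a.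
Proof.
elim: L => [|t L IH] /=; first by rewrite big_nil /Rdiv Rmult_0_l.
by rewrite big_cons plus_INR IH /Rdiv Rmult_plus_distr_r.
Qed.

Lemma ratio_le_of_mul_le (S M n K : nat) (D : R) : (0 < M)%nat -> 0 < D <= INR K ->
  (K * S <= n * M)%nat -> INR S / INR M <= INR n / D.
Proof.
move=> M_gt0 [D_gt0 DK] /leP /le_INR; rewrite !mult_INR => KS.
have M_pos : 0 < INR M by apply/lt_0_INR/ltP.
apply: (Rle_trans _ (INR n / INR K)).
  have K_pos : 0 < INR K by lra.
  apply: (Rmult_le_reg_l (INR M * INR K)); first nra.
  replace (INR M * INR K * (INR S / INR M)) with (INR K * INR S) by (field; lra).
  by replace (INR M * INR K * (INR n / INR K)) with (INR n * INR M) by (field; lra).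
by apply: Rmult_le_compat_l; [exact: pos_INR | exact: Rinv_le_contravar].
Qed.

Theorem proposition2p7 :
  exists C : R, exists N : nat, forall n : nat, (N <= n)%nat ->
    forall L : seq ptree, rep_system (fun t => (nnodes t <= n)%nat) L ->
      (Rabs (fold_right Rplus 0
         (map (fun t => if Rle_dec (logs (INR n)) (INR (nnodes t))
                        then 1 - coefS t n / coefT n else 0) L))
       <= C * Rabs (INR n / logs (INR n))).
Proof.
exists 1, 2%nat => n n_ge2 L [_ [_ L_uniq]].
have D_pos := logs_gt0 n_ge2.
have [K K_ceil] := nat_ceil (logs (INR n)).
have K_gt0 : (0 < K)%nat.
  by rewrite lt0n; apply/eqP => /eq_leq /(K_ceil 0%nat).2 /=; lra.
have term t : (if Rle_dec (logs (INR n)) (INR (nnodes t)) then 1 - coefS t n / coefT n else 0)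
    = INR (if (K <= nnodes t)%nat then ncontain t n else 0%nat) / INR (nrec n).
  case: Rle_dec => Dt; first by rewrite ((K_ceil _).1 Dt) one_sub_coefS_coefT //; lia.
  have /negbTE -> : ~~ (K <= nnodes t)%nat by apply/negP => /K_ceil.
  by rewrite /= /Rdiv Rmult_0_l.
have nrec_pos : (0 < nrec n)%nat by apply: nrec_gt0; lia.
rewrite (eq_map term) fold_Rplus_INR -big_mkcond Rmult_1_l !Rabs_pos_eq.
- apply: ratio_le_of_mul_le nrec_pos _ (sum_ncontain_le n L_uniq K_gt0).
  by split=> //; apply/K_ceil.
- by apply: Rlt_le; apply: Rdiv_lt_0_compat => //; apply/lt_0_INR/leP; lia.
- by apply: Rmult_le_pos; [exact: pos_INR | apply/Rlt_le/Rinv_0_lt_compat/lt_0_INR/ltP].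
Qed.
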